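(* Let $H$ be a monoid that is either a group or such that its set of non-units $H\setminus H^\times$ does not form an almost-breakable semigroup. Then $\mathcal{P}_{\mathrm{fin},1}(H)$ is UmF if and only if $H$ is either trivial or isomorphic to the group of integers modulo $2$ under addition.
   Context: For a monoid $H$, $\mathcal{P}_{\mathrm{fin},1}(H)$ denotes the set of all non-empty finite subsets of $H$ containing $1_H$, a monoid under setwise multiplication $XY=\{xy: x\in X, y\in Y\}$. $H^\times$ is the group of units of $H$. Divisibility in a monoid $M$: $x\mid_M y$ iff $y\in MxM$; $x,y$ are associated if each divides the other; proper divisor means divides but not associated. A unit-divisor divides $1_M$; otherwise it is a non-unit-divisor. An irreducible is a non-unit-divisor $a$ with $a\neq xy$ for all non-unit-divisors $x,y$ properly dividing $a$. A factorization of $x$ is a word over the irreducibles whose product is $x$. For words $\mathfrak a,\mathfrak b$, $\mathfrak a\sqsubseteq\mathfrak b$ means $\mathfrak a$ is, up to associatedness of letters, a subword (subsequence) of a permutation of $\mathfrak b$; equivalence means $\sqsubseteq$ both ways. A factorization $\mathfrak a$ of $x$ is minimal if no factorization $\mathfrak b$ of $x$ satisfies $\mathfrak b\sqsubseteq\mathfrak a\not\sqsubseteq\mathfrak b$. $M$ is UmF if every non-unit-divisor is a product of irreducibles and any two minimal factorizations of an element are equivalent. A semigroup $S$ is almost-breakable if for all $x,y\in S$, $xy\in\{x,y\}$ or $yx\in\{x,y\}$. *)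

From HB Require Import structures.
From mathcomp Require Import all_boot monoid.
From mathcomp Require Import all_algebra.
From mathcomp Require Import finmap.
From Stdlib Require Import Permutation.
From Stdlib Require List.

Set Implicit Arguments.
Unset Strict Implicit.
Unset Printing Implicit Defensive.

Local Open Scope fset_scope.

Section RawMonoid.
Variables (T : Type) (mul : T -> T -> T) (one : T).

Definition mdvd (x y : T) : Prop := exists a b, y = mul (mul a x) b.

Definition massoc (x y : T) : Prop := mdvd x y /\ mdvd y x.

Definition mproper_dvd (x y : T) : Prop := mdvd x y /\ ~ massoc x y.

Definition unit_divisor (x : T) : Prop := mdvd x one.

Definition mirreducible (a : T) : Prop :=
  ~ unit_divisor a /\
  forall x y, ~ unit_divisor x -> ~ unit_divisor y ->
    mproper_dvd x a -> mproper_dvd y a -> a <> mul x y.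

Definition wprod (w : list T) : T := foldr mul one w.

Definition factorization (x : T) (w : list T) : Prop :=
  List.Forall mirreducible w /\ wprod w = x.

Definition subword (a b : list T) : Prop :=
  exists b', Permutation b b' /\ exists m : seq bool, List.Forall2 massoc a (mask m b').

Definition word_equiv (a b : list T) : Prop := subword a b /\ subword b a.

Definition minimal_factorization (x : T) (a : list T) : Prop :=
  factorization x a /\
  ~ (exists b, factorization x b /\ subword b a /\ ~ subword a b).

Definition UmF : Prop :=
  (forall x, ~ unit_divisor x -> exists w, factorization x w) /\
  (forall x a b, minimal_factorization x a -> minimal_factorization x b ->
     word_equiv a b).

End RawMonoid.

Local Open Scope group_scope.

Definition is_unit (H : monoidType) (x : H) : Prop :=
  exists y : H, x * y = 1 /\ y * x = 1.

Definition is_group (H : monoidType) : Prop := forall x : H, is_unit x.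

Definition nonunits_almost_breakable_semigroup (H : monoidType) : Prop :=
  (forall x y : H, ~ is_unit x -> ~ is_unit y -> ~ is_unit (x * y)) /\
  (forall x y : H, ~ is_unit x -> ~ is_unit y ->
     (x * y = x \/ x * y = y) \/ (y * x = x \/ y * x = y)).

Definition trivial_monoid (H : monoidType) : Prop := forall x : H, x = 1.

Definition iso_Z2 (H : monoidType) : Prop :=
  exists f : H -> 'Z_2, bijective f /\ f 1 = 0%R /\
    forall x y : H, f (x * y) = (f x + f y)%R.

Definition Pfin1 (H : monoidType) := {X : {fset H} | 1 \in X}.

Definition setmul (H : monoidType) (X Y : {fset H}) : {fset H} :=
  [fset x * y | x in X, y in Y].

Lemma setmul_one (H : monoidType) (X Y : Pfin1 H) :
  (1 : H) \in setmul (val X) (val Y).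
Proof.
apply/imfset2P; exists 1; first exact: (valP X).
by exists 1; [exact: (valP Y) | rewrite mulg1].
Qed.

Definition Pfin1_mul (H : monoidType) (X Y : Pfin1 H) : Pfin1 H :=
  exist _ (setmul (val X) (val Y)) (setmul_one X Y).

Definition Pfin1_one (H : monoidType) : Pfin1 H :=
  exist _ [fset (1 : H)] (fset11 (1 : H)).

Definition Pfin1_UmF (H : monoidType) : Prop :=
  UmF (@Pfin1_mul H) (Pfin1_one H).

(* In P_{fin,1}(H) a divisor is a subset, so associated elements are equal,
   {1} is the only unit divisor and {1,a} is irreducible whenever a <> 1.
   Under UmF every letter of a minimal factorization of X occurs in every
   factorization of X, because any factorization shrinks to a minimal one.
   This excludes a^2 \notin {1,a}: then [{1,a}; {1,a^2}] is a minimal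
   factorization of {1,a}^3 = {1,a}{1,a^2} whose letter {1,a^2} is missing
   from [{1,a}; {1,a}; {1,a}].  In a group every a <> 1 is thus an
   involution, and a unit b \notin {1,a} would give {1,a}{1,b} = {1,a}{1,ab},
   so H = {1,a}.  Outside groups the non-units are idempotent, and idempotents
   x, y with xy, yx \notin {x,y} would give {1,y}{1,x} = {1,x,y}{1,x} with
   {1,x,y} irreducible, so the non-units form an almost-breakable semigroup.
   Conversely, if H = {1,a} then P_{fin,1}(H) = {{1}, {1,a}} with {1,a}
   idempotent, and such a monoid is UmF. *)

From HB Require Import structures.
From mathcomp Require Import all_boot monoid all_algebra finmap.
From Stdlib Require Import Permutation Classical.
From Stdlib Require List.

Set Implicit Arguments.
Unset Strict Implicit.
Unset Printing Implicit Defensive.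

Lemma In_mask (T : Type) (m : bitseq) (s : seq T) x :
  List.In x (mask m s) -> List.In x s.
Proof.
elim: s m => [|y s IH] [|[] m] //=; last by move/IH; right.
by case=> [->|/IH]; [left | right].
Qed.

Section UnitalMagma.
Variables (T : eqType) (mul : T -> T -> T) (one : T).
Hypotheses (mul1x : forall x, mul one x = x) (mulx1 : forall x, mul x one = x).

Lemma mdvd_refl x : mdvd mul x x.
Proof. by exists one, one; rewrite mul1x mulx1. Qed.

Lemma massoc_refl x : massoc mul x x.
Proof. by split; apply: mdvd_refl. Qed.

Lemma massoc_neq x y : ~ massoc mul x y -> x <> y.
Proof. by move=> nxy exy; apply: nxy; rewrite exy; apply: massoc_refl. Qed.

Lemma Forall2_massoc_refl a : List.Forall2 (massoc mul) a a.
Proof. by elim: a => //= x a IH; constructor=> //; apply: massoc_refl. Qed.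

Lemma subword_perm a b : Permutation b a -> subword mul a b.
Proof.
move=> pba; exists a; split=> //; exists (nseq (size a) true).
by rewrite mask_true //; apply: Forall2_massoc_refl.
Qed.

Lemma subword_refl a : subword mul a a.
Proof. exact/subword_perm/Permutation_refl. Qed.

Lemma subword_head x a : subword mul [:: x] (x :: a).
Proof.
exists (x :: a); split; first exact: Permutation_refl.
by exists [:: true]; apply: Forall2_massoc_refl.
Qed.

Lemma subword_size a b : subword mul a b -> size a <= size b.
Proof.
case=> b' [pb [m /List.Forall2_length ea]].
change (length a <= length b); rewrite ea (Permutation_length pb).
exact: size_subseq (mask_subseq m b').
Qed.

Lemma factorization_pair x A B :
  mirreducible mul one A -> mirreducible mul one B -> mul A B = x ->
  factorization mul one x [:: A; B].
Proof.
by move=> iA iB <-; split; [do 2 constructor=> // | rewrite /= mulx1].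
Qed.

Lemma UmF_of_cover_idem e : mul e e = e -> (forall x, x = one \/ x = e) ->
  UmF mul one.
Proof.
move=> ee cover.
have ud_one : unit_divisor mul one one by apply: mdvd_refl.
have irr_e x : mirreducible mul one x -> x = e /\ e <> one.
  case=> nud _; case: (cover x) => ex; first by case: nud; rewrite ex.
  by split=> // e1; apply: nud; rewrite ex e1.
have e_irr : e <> one -> mirreducible mul one e.
  move=> e1; split=> [[a [b eab]]|x y nudx _ [_ nax] _ _].
    by apply: e1; rewrite eab; case: (cover a) => ->; case: (cover b) => ->;
      rewrite ?mul1x ?mulx1 ?ee.
  case: (cover x) => ex; first by case: nudx; rewrite ex.
  by case: nax; rewrite ex; apply: massoc_refl.
have wprod_e w : List.Forall (mirreducible mul one) w ->
    wprod mul one w = if w is [::] then one else e.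
  elim: w => //= x w IH /List.Forall_cons_iff [/irr_e [-> _] /IH ->].
  by case: w {IH}; rewrite ?mulx1 ?ee.
have min_shape x w : minimal_factorization mul one x w ->
    w = if x == one then [::] else [:: e].
  case=> [[fw <-] nmin]; rewrite wprod_e //.
  case: w fw nmin => [|y [|z w]] fw nmin; first by rewrite eqxx.
    by have [-> /eqP/negbTE ->] := irr_e y (List.Forall_inv fw).
  have [ey ne1] := irr_e y (List.Forall_inv fw).
  case: nmin; exists [:: e]; split; [split | split].
  - by constructor; [apply: e_irr | constructor].
  - by rewrite (wprod_e _ fw) /= mulx1.
  - by rewrite ey; apply: subword_head.
  - by move/subword_size; rewrite /= ltnS ltn0.
split=> [x nud | x a b /min_shape -> /min_shape ->]; last first.
  by split; apply: subword_refl.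
have [ex e1] : x = e /\ e <> one.
  case: (cover x) => ex; first by case: nud; rewrite ex.
  by split=> // e1; case: nud; rewrite ex e1.
exists [:: e]; split; last by rewrite ex /= mulx1.
by constructor; [apply: e_irr | constructor].
Qed.

Section AssociatedEqual.
Hypothesis massoc_eq : forall x y, massoc mul x y -> x = y.

Lemma Forall2_massoc_eq a b : List.Forall2 (massoc mul) a b -> a = b.
Proof. by elim=> //= x y a' b' /massoc_eq -> _ ->. Qed.

Lemma subword_mem a b L : subword mul a b -> List.In L a -> List.In L b.
Proof.
case=> b' [pb [m /Forall2_massoc_eq ->]] L_in; have := In_mask L_in.
by apply: Permutation_in; apply: Permutation_sym.
Qed.

Lemma subword_size_eq a b :
  subword mul b a -> size b = size a -> subword mul a b.
Proof.
case=> a' [pa [m /Forall2_massoc_eq ->]] eq_size.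
have /eqP full : mask m a' == a'.
  rewrite -(size_subseq_leqif (mask_subseq m a')) eq_size.
  exact/eqP/(Permutation_length pa).
by rewrite full; apply/subword_perm/Permutation_sym.
Qed.

Lemma minimal_factorization_of_shorter x a : factorization mul one x a ->
  (forall b, size b < size a -> (forall L, List.In L b -> List.In L a) ->
     wprod mul one b <> x) ->
  minimal_factorization mul one x a.
Proof.
move=> fa no_shorter; split=> // -[b [[_ eb] [sba nsab]]].
have := subword_size sba; rewrite leq_eqVlt => /orP [/eqP eq_size | lt_ba].
  exact: nsab (subword_size_eq sba eq_size).
exact: no_shorter b lt_ba (fun L => subword_mem sba) eb.
Qed.

Lemma minimal_factorization_pair x A B : factorization mul one x [:: A; B] ->
  x <> one -> x <> A -> x <> B -> minimal_factorization mul one x [:: A; B].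
Proof.
move=> fx x1 xA xB; apply: minimal_factorization_of_shorter => //.
case=> [|L [|? ?]] //= _ sub; first exact: not_eq_sym.
case: (sub L (or_introl erefl)) => [|[|[]]] <-;
  by rewrite mulx1; apply: not_eq_sym.
Qed.

Lemma exists_minimal_factorization_sub x u : factorization mul one x u ->
  exists2 w, minimal_factorization mul one x w &
    forall L, List.In L w -> List.In L u.
Proof.
have [n] := ubnP (size u); elim: n u => // n IH u /ltnSE le_un fu.
have [mu | nmu] := classic (minimal_factorization mul one x u).
  by exists u.
have [b [fb [sbu nsub]]] : exists b, factorization mul one x b /\
    subword mul b u /\ ~ subword mul u b.
  by apply: NNPP => no_b; apply: nmu; split.
have lt_bu : size b < size u.
  rewrite ltn_neqAle subword_size // andbT; apply/eqP => eq_size.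
  exact: nsub (subword_size_eq sbu eq_size).
have [w mw sub_wb] := IH b (leq_trans lt_bu le_un) fb.
by exists w => // L /sub_wb /(subword_mem sbu).
Qed.

Lemma UmF_minimal_mem x u v L : UmF mul one ->
  minimal_factorization mul one x v -> factorization mul one x u ->
  List.In L v -> List.In L u.
Proof.
case=> _ unique mv /exists_minimal_factorization_sub [w mw sub_wu] Lv.
have [svw _] := unique x v w mv mw.
exact: sub_wu (subword_mem svw Lv).
Qed.

End AssociatedEqual.
End UnitalMagma.

Local Open Scope fset_scope.
Local Open Scope group_scope.

Section Pfin1.
Variable H : monoidType.
Implicit Types (X Y : Pfin1 H) (s t : seq H) (a b x y : H).
Local Notation Pmul := (@Pfin1_mul H).
Local Notation Pone := (Pfin1_one H).

Lemma Pfin1_ext X Y : val X =i val Y -> X = Y.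
Proof. by move=> eXY; apply/val_inj/fsetP. Qed.

Lemma Pfin1_mulP X Y z :
  reflect (exists x y, [/\ x \in val X, y \in val Y & z = x * y])
          (z \in val (Pmul X Y)).
Proof.
apply: (iffP idP) => [/imfset2P [x xX [y yY ->]] | [x [y [xX yY ->]]]].
  by exists x, y.
by apply/imfset2P; exists x => //; exists y.
Qed.

Lemma in_Pfin1_one z : (z \in val Pone) = (z == 1).
Proof. exact: in_fset1. Qed.

Lemma Pfin1_mul1g X : Pmul Pone X = X.
Proof.
apply: Pfin1_ext => z; apply/Pfin1_mulP/idP => [[x [y [+ yX ->]]] | zX].
  by rewrite in_Pfin1_one => /eqP ->; rewrite mul1g.
by exists 1, z; rewrite in_Pfin1_one mul1g.
Qed.

Lemma Pfin1_mulg1 X : Pmul X Pone = X.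
Proof.
apply: Pfin1_ext => z; apply/Pfin1_mulP/idP => [[x [y [xX + ->]]] | zX].
  by rewrite in_Pfin1_one => /eqP ->; rewrite mulg1.
by exists z, 1; rewrite in_Pfin1_one mulg1.
Qed.

Lemma Pfin1_mdvd_sub X Y : mdvd Pmul X Y -> {subset val X <= val Y}.
Proof.
case=> A [B ->] x xX; apply/Pfin1_mulP; exists x, 1.
split; [apply/Pfin1_mulP; exists 1, x | exact: (valP B) | by rewrite mulg1].
by rewrite mul1g (valP A).
Qed.

Lemma Pfin1_massoc_eq X Y : massoc Pmul X Y -> X = Y.
Proof.
case=> /Pfin1_mdvd_sub sXY /Pfin1_mdvd_sub sYX.
by apply: Pfin1_ext => z; apply/idP/idP => [/sXY | /sYX].
Qed.

Lemma Pfin1_unit_divisor X : unit_divisor Pmul Pone X <-> X = Pone.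
Proof.
split=> [/Pfin1_mdvd_sub sX1 | ->]; last first.
  exact: mdvd_refl Pfin1_mul1g Pfin1_mulg1 _.
apply: Pfin1_ext => z; rewrite in_Pfin1_one.
apply/idP/eqP => [/sX1 | ->]; last exact: (valP X).
by rewrite in_Pfin1_one => /eqP.
Qed.

Lemma Pfin1_mirreducible X : X <> Pone ->
  (forall U V, U <> Pone -> V <> Pone -> U <> X -> V <> X ->
     {subset val U <= val X} -> {subset val V <= val X} -> Pmul U V <> X) ->
  mirreducible Pmul Pone X.
Proof.
move=> X1 no_split; split=> [/Pfin1_unit_divisor // | U V].
move=> /Pfin1_unit_divisor U1 /Pfin1_unit_divisor V1 [dUX nUX] [dVX nVX] eX.
apply: (no_split U V) => //.
- exact: (massoc_neq Pfin1_mul1g Pfin1_mulg1 nUX).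
- exact: (massoc_neq Pfin1_mul1g Pfin1_mulg1 nVX).
- exact: Pfin1_mdvd_sub dUX.
- exact: Pfin1_mdvd_sub dVX.
Qed.

Lemma in_Pfin1_of_head s : (1 : H) \in seq_fset tt (1 :: s).
Proof. by rewrite seq_fsetE mem_head. Qed.

Definition Pfin1_of s : Pfin1 H :=
  exist _ (seq_fset tt (1 :: s)) (in_Pfin1_of_head s).

Lemma in_Pfin1_of s z : (z \in val (Pfin1_of s)) = (z \in 1 :: s).
Proof. exact: seq_fsetE. Qed.

Lemma Pfin1_of_nil : Pfin1_of [::] = Pone.
Proof. by apply: Pfin1_ext => z; rewrite in_Pfin1_of in_Pfin1_one inE. Qed.

Lemma Pfin1_of_neq z s t :
  z \in s -> z \notin 1 :: t -> Pfin1_of s <> Pfin1_of t.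
Proof.
move=> zs /negP zt est; apply: zt.
by rewrite -in_Pfin1_of -est in_Pfin1_of inE zs orbT.
Qed.

Arguments Pfin1_of_neq z {s t}.

Lemma Pfin1_of_neq1 z s : z \in s -> z != 1 -> Pfin1_of s <> Pone.
Proof.
move=> zs z1; rewrite -Pfin1_of_nil.
by apply: Pfin1_of_neq zs _; rewrite mem_seq1.
Qed.

Lemma Pfin1_of_mul s t :
  Pmul (Pfin1_of s) (Pfin1_of t) =
  Pfin1_of [seq x * y | x <- 1 :: s, y <- 1 :: t].
Proof.
apply: Pfin1_ext => z; rewrite in_Pfin1_of; apply/Pfin1_mulP/idP.
  case=> x [y [+ + ->]]; rewrite !in_Pfin1_of => xs yt.
  by rewrite inE; apply/orP; right; apply/allpairsP; exists (x, y).
rewrite inE => /orP [/eqP -> | /allpairsP [[x y] [xs yt ->]]].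
  by exists 1, 1; rewrite !in_Pfin1_of !mem_head mulg1.
by exists x, y; rewrite !in_Pfin1_of.
Qed.

Lemma Pfin1_of_eq s t : all (mem (1 :: t)) s -> all (mem (1 :: s)) t ->
  Pfin1_of s = Pfin1_of t.
Proof.
move=> /allP st /allP ts; apply: Pfin1_ext => z; rewrite !in_Pfin1_of.
apply/idP/idP; rewrite inE => /orP [/eqP -> | ]; rewrite ?mem_head //.
  exact: st.
exact: ts.
Qed.

Lemma Pfin1_of_sub s W : {subset val W <= val (Pfin1_of s)} ->
  W = Pfin1_of [seq z <- s | z \in val W].
Proof.
move=> sW; apply: Pfin1_ext => z; rewrite in_Pfin1_of inE mem_filter.
apply/idP/orP => [zW | [/eqP -> | /andP [] //]]; last exact: (valP W).
by move: (sW z zW); rewrite in_Pfin1_of inE zW => /orP [->|->]; [left | right].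
Qed.

Lemma Pfin1_of1_mirreducible a : a != 1 ->
  mirreducible Pmul Pone (Pfin1_of [:: a]).
Proof.
move=> a1; apply: Pfin1_mirreducible => [|U V U1 _ UA _ sUA _ _].
  exact: Pfin1_of_neq1 (mem_head _ _) a1.
move: U1 UA; rewrite (Pfin1_of_sub sUA) /=.
by case: (a \in val U) => U1 UA; [apply: UA | apply: U1; rewrite Pfin1_of_nil].
Qed.

Lemma Pfin1_of1_cover a : (forall h : H, h = 1 \/ h = a) ->
  forall X, X = Pone \/ X = Pfin1_of [:: a].
Proof.
move=> cover X; have sX : {subset val X <= val (Pfin1_of [:: a])}.
  move=> z _; rewrite in_Pfin1_of !inE.
  by case: (cover z) => ->; rewrite eqxx ?orbT.
rewrite (Pfin1_of_sub sX) /=; case: (a \in val X); first by right.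
by rewrite Pfin1_of_nil; left.
Qed.

Lemma Pfin1_UmF_of_cover a : (forall h : H, h = 1 \/ h = a) -> Pfin1_UmF H.
Proof.
move=> cover.
apply: (UmF_of_cover_idem Pfin1_mul1g Pfin1_mulg1 _ (Pfin1_of1_cover cover)).
rewrite Pfin1_of_mul; apply: Pfin1_of_eq;
  rewrite /= !mul1g !mulg1 !inE ?eqxx ?orbT //=.
by case: (cover (a * a)) => ->; rewrite eqxx ?orbT.
Qed.

Lemma Pfin1_of2_mirreducible x y : x * x = x -> y * y = y -> x != 1 -> y != 1 ->
  x != y -> x * y \notin [:: 1; x; y] -> y * x \notin [:: 1; x; y] ->
  mirreducible Pmul Pone (Pfin1_of [:: x; y]).
Proof.
move=> xx yy x1 y1 xy xyC yxC; have yx : y != x by rewrite eq_sym.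
apply: Pfin1_mirreducible => [|U V U1 V1 UC VC sU sV].
  exact: Pfin1_of_neq1 (mem_head _ _) x1.
have sub_pair W : W <> Pone -> W <> Pfin1_of [:: x; y] ->
    {subset val W <= val (Pfin1_of [:: x; y])} ->
    W = Pfin1_of [:: x] \/ W = Pfin1_of [:: y].
  move=> W1 WC /Pfin1_of_sub eW; rewrite eW /= in W1 WC *.
  case: (x \in val W) (y \in val W) W1 WC => [] [] //=; rewrite ?Pfin1_of_nil;
  by auto.
case: (sub_pair U U1 UC sU) => ->; case: (sub_pair V V1 VC sV) => ->;
  rewrite Pfin1_of_mul /= ?mul1g ?mulg1 ?xx ?yy.
- move/esym; apply: (Pfin1_of_neq y); first by rewrite !inE eqxx orbT.
  by rewrite !inE (negbTE y1) (negbTE yx).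
- by apply: (Pfin1_of_neq (x * y)); rewrite // !inE eqxx !orbT.
- by apply: (Pfin1_of_neq (y * x)); rewrite // !inE eqxx !orbT.
- move/esym; apply: (Pfin1_of_neq x); first by rewrite !inE eqxx.
  by rewrite !inE (negbTE x1) (negbTE xy).
Qed.

Section UmF.
Hypothesis UmF : Pfin1_UmF H.
Local Notation UmF_mem :=
  (UmF_minimal_mem Pfin1_mul1g Pfin1_mulg1 Pfin1_massoc_eq UmF).
Local Notation minimal_pair :=
  (minimal_factorization_pair Pfin1_mul1g Pfin1_mulg1 Pfin1_massoc_eq).
Local Notation factorization_pair := (factorization_pair Pfin1_mulg1).

Lemma Pfin1_UmF_sqr a : a * a = 1 \/ a * a = a.
Proof.
apply: NNPP => /not_or_and [/eqP aa1 /eqP aaa].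
have a1 : a != 1 by apply: contraNneq aa1 => ->; rewrite mulg1.
have a_aa : a != a * a by rewrite eq_sym.
set A := Pfin1_of [:: a]; set A2 := Pfin1_of [:: a * a].
set X := Pfin1_of [:: a; a * a; a * a * a].
have iA := Pfin1_of1_mirreducible a1; have iA2 := Pfin1_of1_mirreducible aa1.
have AA2 : Pmul A A2 = X.
  rewrite Pfin1_of_mul; apply: Pfin1_of_eq;
  by rewrite /= !mul1g !mulg1 ?mulgA !inE !eqxx ?orbT.
have AAA : Pmul A (Pmul A (Pmul A Pone)) = X.
  rewrite Pfin1_mulg1 !Pfin1_of_mul; apply: Pfin1_of_eq;
  by rewrite /= !mul1g !mulg1 ?mulgA !inE !eqxx ?orbT.
have mX : minimal_factorization Pmul Pone X [:: A; A2].
  apply: minimal_pair; first exact: factorization_pair.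
  - exact: Pfin1_of_neq1 (mem_head _ _) a1.
  - apply: (Pfin1_of_neq (a * a)); first by rewrite !inE eqxx orbT.
    by rewrite !inE (negbTE aa1) (negbTE aaa).
  - apply: (Pfin1_of_neq a); first exact: mem_head.
    by rewrite !inE (negbTE a1) (negbTE a_aa).
have fX : factorization Pmul Pone X [:: A; A; A].
  by split; [do 3 constructor=> // | exact: AAA].
have := UmF_mem mX fX (or_intror (or_introl erefl)).
by case=> [|[|[|[]]]]; apply: (Pfin1_of_neq a);
  rewrite ?mem_head // !inE (negbTE a1) (negbTE a_aa).
Qed.

Lemma Pfin1_UmF_unit_cover a b :
  a * a = 1 -> a != 1 -> is_unit b -> b = 1 \/ b = a.
Proof.
move=> aa a1 [b' [bb' _]]; apply: NNPP => /not_or_and [/eqP b1 /eqP ba].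
have aab : a * (a * b) = b by rewrite mulgA aa mul1g.
have ab1 : a * b != 1 by apply: contraNneq ba => ab1; rewrite -aab ab1 mulg1.
have abb : a * b != b.
  by apply: contraNneq a1 => abb; rewrite -(mulg1 a) -bb' mulgA abb.
have ab : a != b by rewrite eq_sym.
have b_ab : b != a * b by rewrite eq_sym.
set A := Pfin1_of [:: a]; set B := Pfin1_of [:: b].
set C := Pfin1_of [:: a * b]; set X := Pfin1_of [:: a; b; a * b].
have iA := Pfin1_of1_mirreducible a1; have iB := Pfin1_of1_mirreducible b1.
have iC := Pfin1_of1_mirreducible ab1.
have AB : Pmul A B = X.
  rewrite Pfin1_of_mul; apply: Pfin1_of_eq;
  by rewrite /= !mul1g !mulg1 !inE !eqxx ?orbT.
have AC : Pmul A C = X.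
  rewrite Pfin1_of_mul; apply: Pfin1_of_eq;
  by rewrite /= !mul1g !mulg1 aab !inE !eqxx ?orbT.
have mX : minimal_factorization Pmul Pone X [:: A; B].
  apply: minimal_pair; first exact: factorization_pair.
  - exact: Pfin1_of_neq1 (mem_head _ _) a1.
  - apply: (Pfin1_of_neq b); first by rewrite !inE eqxx orbT.
    by rewrite !inE (negbTE b1) (negbTE ba).
  - apply: (Pfin1_of_neq a); first exact: mem_head.
    by rewrite !inE (negbTE a1) (negbTE ab).
have fX : factorization Pmul Pone X [:: A; C] by exact: factorization_pair.
have := UmF_mem mX fX (or_intror (or_introl erefl)).
by case=> [|[|[]]] /esym; apply: (Pfin1_of_neq b);
  rewrite ?mem_head // !inE (negbTE b1) ?(negbTE ba) ?(negbTE b_ab).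
Qed.

Lemma Pfin1_UmF_idem_breakable x y :
  x * x = x -> y * y = y -> x != 1 -> y != 1 ->
  (x * y = x \/ x * y = y) \/ (y * x = x \/ y * x = y).
Proof.
move=> xx yy x1 y1; apply: NNPP => /not_or_and [].
move=> /not_or_and [/eqP xyx /eqP xyy] /not_or_and [/eqP yxx /eqP yxy].
have xy : x != y by apply: contraNneq xyx => <-; rewrite xx.
have yx : y != x by rewrite eq_sym.
have xy1 : x * y != 1.
  by apply: contraNneq x1 => xy1; rewrite -xy1 -{2}xx -mulgA xy1 mulg1.
have yx1 : y * x != 1.
  by apply: contraNneq y1 => yx1; rewrite -yx1 -{2}yy -mulgA yx1 mulg1.
set A := Pfin1_of [:: x]; set B := Pfin1_of [:: y].
set C := Pfin1_of [:: x; y]; set Z := Pfin1_of [:: x; y; y * x].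
have iA := Pfin1_of1_mirreducible x1; have iB := Pfin1_of1_mirreducible y1.
have iC : mirreducible Pmul Pone C.
  apply: Pfin1_of2_mirreducible; rewrite // !inE !negb_or.
    by rewrite xy1 xyx xyy.
  by rewrite yx1 yxx yxy.
have BA : Pmul B A = Z.
  rewrite Pfin1_of_mul; apply: Pfin1_of_eq;
  by rewrite /= !mul1g !mulg1 !inE !eqxx ?orbT.
have CA : Pmul C A = Z.
  rewrite Pfin1_of_mul; apply: Pfin1_of_eq;
  by rewrite /= !mul1g !mulg1 xx !inE !eqxx ?orbT.
have mZ : minimal_factorization Pmul Pone Z [:: B; A].
  apply: minimal_pair; first exact: factorization_pair.
  - exact: Pfin1_of_neq1 (mem_head _ _) x1.
  - apply: (Pfin1_of_neq x); first exact: mem_head.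
    by rewrite !inE (negbTE x1) (negbTE xy).
  - apply: (Pfin1_of_neq y); first by rewrite !inE eqxx orbT.
    by rewrite !inE (negbTE y1) (negbTE yx).
have fZ : factorization Pmul Pone Z [:: C; A] by exact: factorization_pair.
have := UmF_mem mZ fZ (or_introl erefl).
by case=> [|[|[]]]; apply: (Pfin1_of_neq x);
  rewrite ?mem_head // !inE (negbTE x1) (negbTE xy).
Qed.

End UmF.

End Pfin1.

Lemma is_unit1 (H : monoidType) : is_unit (1 : H).
Proof. by exists 1; rewrite mulg1. Qed.

Lemma is_unit_idem_eq1 (H : monoidType) (a : H) :
  is_unit a -> a * a = a -> a = 1.
Proof. by case=> a' [aa' _] aa; rewrite -aa' -{2}aa -mulgA aa' mulg1. Qed.

Lemma Z2_cases (z : 'Z_2) : z = 0%R \/ z = 1%R.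
Proof. by case: z => [[|[|?]] ?] //; [left | right]; apply/val_inj. Qed.

Lemma iso_Z2_cover (H : monoidType) : iso_Z2 H ->
  exists a : H, forall h : H, h = 1 \/ h = a.
Proof.
case=> f [[g fK _] [f1 _]]; exists (g 1%R) => h.
by case: (Z2_cases (f h)) => fh; [left | right]; rewrite -(fK h) fh // -f1 fK.
Qed.

Lemma iso_Z2_of_involution (H : monoidType) (a : H) : a != 1 -> a * a = 1 ->
  (forall h : H, h = 1 \/ h = a) -> iso_Z2 H.
Proof.
move=> a1 aa cover.
exists (fun h => if h == 1 then 0%R else 1%R); split; [|split].
- exists (fun z : 'Z_2 => if z == 0%R then 1 else a).
    by move=> h; case: (cover h) => ->; rewrite ?eqxx // (negbTE a1).
  by move=> z; case: (Z2_cases z) => ->; rewrite ?eqxx // (negbTE a1).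
- by rewrite eqxx.
- move=> x y; case: (cover x) => ->; case: (cover y) => ->;
  by rewrite ?mul1g ?mulg1 ?aa ?eqxx ?(negbTE a1); apply: val_inj.
Qed.

Lemma Pfin1_UmF_group_small (H : monoidType) : is_group H -> Pfin1_UmF H ->
  trivial_monoid H \/ iso_Z2 H.
Proof.
move=> grp UmF; have [|ntriv] := classic (trivial_monoid H); first by left.
have [a /eqP a1] := not_all_ex_not _ _ ntriv.
have aa : a * a = 1.
  case: (Pfin1_UmF_sqr UmF a) => // /(is_unit_idem_eq1 (grp a)) /eqP.
  by rewrite (negbTE a1).
right; apply: (iso_Z2_of_involution a1 aa) => b.
exact: (Pfin1_UmF_unit_cover UmF aa a1 (grp b)).
Qed.

Lemma Pfin1_UmF_nonunits_almost_breakable (H : monoidType) : Pfin1_UmF H ->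
  nonunits_almost_breakable_semigroup H.
Proof.
move=> UmF.
have idem (x : H) : ~ is_unit x -> x * x = x.
  by case: (Pfin1_UmF_sqr UmF x) => // xx nx; case: nx; exists x.
have neq1 (x : H) : ~ is_unit x -> x != 1.
  by move=> nx; apply/eqP => x1; apply: nx; rewrite x1; apply: is_unit1.
split=> x y nx ny; last first.
  exact: (Pfin1_UmF_idem_breakable UmF (idem x nx) (idem y ny)
                                    (neq1 x nx) (neq1 y ny)).
case=> v [xyv _]; have /eqP := neq1 x nx; apply.
have : x * (x * y * v) = x * y * v by rewrite !mulgA idem.
by rewrite xyv mulg1.
Qed.

Theorem corollary3p7 (H : monoidType) :
  is_group H \/ ~ nonunits_almost_breakable_semigroup H ->
  (Pfin1_UmF H <-> trivial_monoid H \/ iso_Z2 H).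
Proof.
move=> hyp; split=> [UmF | small].
  case: hyp => [grp | not_ab]; first exact: Pfin1_UmF_group_small.
  by case: not_ab; apply: Pfin1_UmF_nonunits_almost_breakable.
have [a cover] : exists a : H, forall h : H, h = 1 \/ h = a.
  by case: small => [triv | /iso_Z2_cover //]; exists 1 => h; left.
exact: Pfin1_UmF_of_cover cover.
Qed.
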